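(* Let $\mathcal G$ be an MMPG arena, let $(\sigma,\gamma)$ be an incentive strategy profile, and let $Q$ be the set of vertices occurring on $\pi_\sigma$. Then for every follower $p\in P\setminus\{l\}$ and every vertex $v\in Q\cap V_p$ we have $\gamma_p(\sigma)+r_p(\sigma)\ge \mathrm{val}_p(v)$.
   Context: A multi-player mean-payoff game (MMPG) arena is a tuple $\mathcal G=(P,V,(V_p)_{p\in P},v_0,E,(r_p)_{p\in P})$ where $P$ is a finite set of players containing a distinguished leader $l\in P$ (the other players are called followers), $V$ is a finite set of vertices with initial vertex $v_0\in V$, $(V_p)_{p\in P}$ is a partition of $V$ (player $p$ owns $V_p$), $E\subseteq V\times V$ is an edge set such that every vertex has at least one successor, and $r_p:E\to\mathbb Q$ is the reward function of player $p$. A history is a finite sequence $h=v_0v_1\dots v_n$ starting at $v_0$ with $(v_i,v_{i+1})\in E$ for all $i<n$; $\mathsf{last}(h)=v_n$. A play is an infinite such sequence. A strategy of player $p$ is a function $\sigma_p$ assigning to every history $h$ with $\mathsf{last}(h)\in V_p$ a vertex $v$ with $(\mathsf{last}(h),v)\in E$. A strategy profile $\sigma=(\sigma_p)_{p\in P}$ determines a unique play $\pi_\sigma$. The raw payoff of player $p$ on a play $\pi=v_0v_1\dots$ is $r_p(\pi)=\liminf_{n\to\infty}\frac1n\sum_{i=0}^{n-1}r_p((v_i,v_{i+1}))$, and $r_p(\sigma):=r_p(\pi_\sigma)$. For a profile $\sigma$, a player $p$ and a strategy $\sigma'$ of $p$, $\sigma_{p,\sigma'}$ denotes the profile obtained from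 $\sigma$ by replacing $p$'s strategy with $\sigma'$. An incentive for a follower $p$ is a function $\gamma_p$ from histories to $\mathbb R_{\ge 0}$; its value on a play $\pi=v_0v_1\dots$ is $\gamma_p(\pi)=\liminf_{n\to\infty}\frac1n\sum_{i=1}^{n}\gamma_p(v_0\dots v_i)$, and $\gamma_p(\sigma):=\gamma_p(\pi_\sigma)$. An incentive profile is $\gamma=(\gamma_p)_{p\in P\setminus\{l\}}$. A pair $(\sigma,\gamma)$ is an incentive strategy profile (ISP) if for every follower $p$ and every strategy $\sigma'$ of $p$: $r_p(\sigma)+\gamma_p(\sigma)\ge r_p(\sigma_{p,\sigma'})+\gamma_p(\sigma_{p,\sigma'})$. For a follower $p$, $\mathcal G_p$ is the two-player zero-sum mean-payoff game on the graph $(V,E)$ from any start vertex, in which player $p$ controls $V_p$ and maximises the liminf-average of $r_p$, while a coalition of all other players (including the leader) controls $V\setminus V_p$ and minimises it. Such games are determined with optimal memoryless strategies for both sides; $\mathrm{val}_p(v)$ denotes the value of $\mathcal G_p$ from vertex $v$. *)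

From HB Require Import structures.
From Stdlib Require Import Reals QArith Qreals ClassicalEpsilon.
From mathcomp Require Import all_boot.

Set Implicit Arguments.
Unset Strict Implicit.
Unset Printing Implicit Defensive.

Inductive Rbar : Type := Fin (r : R) | PInf | MInf.

Definition Rbar_le (x y : Rbar) : Prop :=
  match x, y with
  | MInf, _ => True
  | _, PInf => True
  | Fin a, Fin b => Rle a b
  | _, _ => False
  end.

(* PInf + MInf never occurs below (raw payoffs are finite); convention MInf. *)
Definition Rbar_plus (x y : Rbar) : Rbar :=
  match x, y with
  | Fin a, Fin b => Fin (Rplus a b)
  | MInf, _ => MInf
  | _, MInf => MInf
  | _, _ => PInf
  end.

Definition Rbar_is_lub (S : Rbar -> Prop) (l : Rbar) : Prop :=
  (forall y, S y -> Rbar_le y l) /\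
  (forall u, (forall y, S y -> Rbar_le y u) -> Rbar_le l u).

Definition Rbar_is_glb (S : Rbar -> Prop) (l : Rbar) : Prop :=
  (forall y, S y -> Rbar_le l y) /\
  (forall u, (forall y, S y -> Rbar_le u y) -> Rbar_le u l).

Definition Rbar_sup (S : Rbar -> Prop) : Rbar :=
  epsilon (inhabits MInf) (Rbar_is_lub S).
Definition Rbar_inf (S : Rbar -> Prop) : Rbar :=
  epsilon (inhabits MInf) (Rbar_is_glb S).

Definition liminf (u : nat -> R) : Rbar :=
  Rbar_sup (fun y => exists N : nat,
    y = Rbar_inf (fun z => exists k : nat, (N <= k)%N /\ z = Fin (u k))).

Fixpoint rsum (f : nat -> R) (n : nat) : R :=
  match n with
  | O => R0
  | S m => Rplus (rsum f m) (f m)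
  end.

Record arena : Type := Arena {
  player : finType;
  leader : player;
  vertex : finType;
  owner : vertex -> player;          (* v \in V_p  <->  owner v = p *)
  init : vertex;
  edge : rel vertex;
  edge_total : forall v, exists w, edge v w;
  reward : player -> vertex -> vertex -> Q  (* r_p, used on edges only *)
}.
Arguments leader : clear implicits.
Arguments owner : clear implicits.
Arguments init : clear implicits.
Arguments edge : clear implicits.
Arguments edge_total : clear implicits.
Arguments reward : clear implicits.

(* Histories are represented as sequences of vertices s :: rest with
   path (edge A) s rest. *)
Definition is_strategy_from (A : arena) (s : vertex A) (p : player A)
  (st : seq (vertex A) -> vertex A) : Prop :=
  forall rest, path (edge A) s rest -> owner A (last s rest) = p ->
    edge A (last s rest) (st (s :: rest)).

Definition is_coalition_strategy_from (A : arena) (s : vertex A) (p : player A)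
  (st : seq (vertex A) -> vertex A) : Prop :=
  forall rest, path (edge A) s rest -> owner A (last s rest) <> p ->
    edge A (last s rest) (st (s :: rest)).

Fixpoint hist (A : arena) (next : seq (vertex A) -> vertex A) (s : vertex A)
  (n : nat) : seq (vertex A) :=
  match n with
  | O => [:: s]
  | S m => let h := hist next s m in rcons h (next h)
  end.

Definition playv (A : arena) (next : seq (vertex A) -> vertex A) (s : vertex A)
  (n : nat) : vertex A := last s (hist next s n).

Definition mean_payoff (A : arena) (p : player A)
  (next : seq (vertex A) -> vertex A) (s : vertex A) : Rbar :=
  liminf (fun n => Rmult (Rinv (INR n)) (rsum (fun i =>
     Q2R (reward A p (playv next s i) (playv next s i.+1))) n)).

Definition profile (A : arena) := player A -> seq (vertex A) -> vertex A.

Definition is_profile (A : arena) (sigma : profile A) : Prop :=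
  forall p, is_strategy_from (init A) p (sigma p).

Definition profile_next (A : arena) (sigma : profile A)
  (h : seq (vertex A)) : vertex A :=
  sigma (owner A (last (init A) h)) h.

Definition play (A : arena) (sigma : profile A) (n : nat) : vertex A :=
  playv (profile_next sigma) (init A) n.

Definition deviate (A : arena) (sigma : profile A) (p : player A)
  (sigma' : seq (vertex A) -> vertex A) : profile A :=
  fun q => if q == p then sigma' else sigma q.

Definition raw_payoff (A : arena) (sigma : profile A) (p : player A) : Rbar :=
  mean_payoff p (profile_next sigma) (init A).

(* gamma p : histories -> R ; only the followers' components matter *)
Definition incentive_profile (A : arena) := player A -> seq (vertex A) -> R.

Definition is_incentive_profile (A : arena) (gamma : incentive_profile A) : Prop :=
  forall p, p != leader A -> forall h, Rle R0 (gamma p h).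

Definition incentive_value (A : arena) (gp : seq (vertex A) -> R)
  (sigma : profile A) : Rbar :=
  liminf (fun n => Rmult (Rinv (INR n))
     (rsum (fun i => gp (hist (profile_next sigma) (init A) i.+1)) n)).

Definition is_ISP (A : arena) (sigma : profile A) (gamma : incentive_profile A)
  : Prop :=
  is_profile sigma /\ is_incentive_profile gamma /\
  forall p, p != leader A ->
  forall sigma', is_strategy_from (init A) p sigma' ->
    Rbar_le
      (Rbar_plus (raw_payoff (deviate sigma p sigma') p)
                 (incentive_value (gamma p) (deviate sigma p sigma')))
      (Rbar_plus (raw_payoff sigma p) (incentive_value (gamma p) sigma)).

Definition gp_next (A : arena) (p : player A) (tau rho : seq (vertex A) -> vertex A)
  (s : vertex A) (h : seq (vertex A)) : vertex A :=
  if owner A (last s h) == p then tau h else rho h.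

(* val_p(v) = sup_tau inf_rho (payoff of p from v); by determinacy of
   mean-payoff games this is the value of G_p from v. *)
Definition game_val (A : arena) (p : player A) (v : vertex A) : Rbar :=
  Rbar_sup (fun y => exists tau, is_strategy_from v p tau /\
    y = Rbar_inf (fun z => exists rho, is_coalition_strategy_from v p rho /\
          z = mean_payoff p (gp_next p tau rho v) v)).

From HB Require Import structures.
From Stdlib Require Import Reals QArith Qreals ClassicalEpsilon.
From Stdlib Require Import Classical Lra.
From mathcomp Require Import all_boot zify.

(* Let h be the prefix of the play that ends at v.  Any strategy tau of p in
   G_p from v yields a deviation of p from sigma: follow sigma along h, then
   play tau.  Against tau, the coalition may answer by replaying sigma after h;
   the deviating play is then h followed by the play of tau against that
   answer, and since rewards are bounded a finite prefix does not change the
   liminf of the running averages.  So r_p(sigma_{p,sigma'}) is at least the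
   value of that play, and as incentives are nonnegative the ISP inequality
   gives r_p(sigma) + gamma_p(sigma) >= r_p(sigma_{p,sigma'}); taking the
   supremum over tau bounds val_p(v). *)

Set Implicit Arguments.
Unset Strict Implicit.

Local Open Scope R_scope.

Lemma Rbar_le_trans x y z : Rbar_le x y -> Rbar_le y z -> Rbar_le x z.
Proof. by case: x; case: y; case: z => //= *; lra. Qed.

Lemma Rbar_plus_comm x y : Rbar_plus x y = Rbar_plus y x.
Proof. by case: x; case: y => //= *; rewrite Rplus_comm. Qed.

Lemma Rbar_le_addr x z : Rbar_le (Fin 0) z -> Rbar_le x (Rbar_plus x z).
Proof. by case: x; case: z => //= *; lra. Qed.

Lemma Rbar_le_Fin_eps a x :
  (forall eps, 0 < eps -> Rbar_le (Fin (a - eps)) x) -> Rbar_le (Fin a) x.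
Proof.
case: x => [b||] //= H; last by apply: (H 1); lra.
apply: Rnot_lt_le => ba; have := H ((a - b) / 2); lra.
Qed.

Lemma Rbar_lub_exists (S : Rbar -> Prop) : exists l, Rbar_is_lub S l.
Proof.
have [SP|SnP] := classic (S PInf).
  by exists PInf; split=> [[]|u /(_ _ SP)].
have [[r0 Sr0]|SnF] := classic (exists r, S (Fin r)); last first.
  by exists MInf; split=> // -[r Sr||] //; apply: SnF; exists r.
have [Sbound|Snbound] := classic (bound (fun r => S (Fin r))).
  case: (completeness _ Sbound (ex_intro _ r0 Sr0)) => m [m_ub m_least].
  exists (Fin m); split=> [[r Sr||]|[b||] b_ub] //=; first exact: m_ub.
    by apply: m_least => r /b_ub.
  exact: b_ub Sr0.
exists PInf; split=> [[]|[b||] b_ub] //=; last exact: b_ub Sr0.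
by apply: Snbound; exists b => r /b_ub.
Qed.

(* The greatest lower bound of [S] is the least upper bound of its lower bounds. *)
Lemma Rbar_glb_exists (S : Rbar -> Prop) : exists l, Rbar_is_glb S l.
Proof.
have [l [l_ub l_least]] := Rbar_lub_exists (fun u => forall y, S y -> Rbar_le u y).
by exists l; split=> [y Sy|u u_lb]; [apply: l_least => u /(_ y Sy)|apply: l_ub].
Qed.

Lemma Rbar_sup_ub (S : Rbar -> Prop) y : S y -> Rbar_le y (Rbar_sup S).
Proof. exact: (proj1 (epsilon_spec _ _ (Rbar_lub_exists S))). Qed.

Lemma Rbar_sup_least (S : Rbar -> Prop) u :
  (forall y, S y -> Rbar_le y u) -> Rbar_le (Rbar_sup S) u.
Proof. exact: (proj2 (epsilon_spec _ _ (Rbar_lub_exists S))). Qed.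

Lemma Rbar_inf_lb (S : Rbar -> Prop) y : S y -> Rbar_le (Rbar_inf S) y.
Proof. exact: (proj1 (epsilon_spec _ _ (Rbar_glb_exists S))). Qed.

Lemma Rbar_inf_greatest (S : Rbar -> Prop) u :
  (forall y, S y -> Rbar_le u y) -> Rbar_le u (Rbar_inf S).
Proof. exact: (proj2 (epsilon_spec _ _ (Rbar_glb_exists S))). Qed.

Definition tail_inf (u : nat -> R) (N : nat) : Rbar :=
  Rbar_inf (fun z => exists k : nat, (N <= k)%N /\ z = Fin (u k)).

Lemma tail_inf_le_liminf u N : Rbar_le (tail_inf u N) (liminf u).
Proof. by apply: Rbar_sup_ub; exists N. Qed.

Lemma tail_inf_le u N k : (N <= k)%N -> Rbar_le (tail_inf u N) (Fin (u k)).
Proof. by move=> Nk; apply: Rbar_inf_lb; exists k. Qed.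

Lemma liminf_ge0 u : (forall k, 0 <= u k) -> Rbar_le (Fin 0) (liminf u).
Proof.
move=> u_ge0; apply: Rbar_le_trans (tail_inf_le_liminf u 0).
by apply: Rbar_inf_greatest => _ [k [_ ->]]; apply: u_ge0.
Qed.

Lemma liminf_le_eventually u w :
  (forall eps, 0 < eps -> exists N, forall k, (N <= k)%N -> u k <= w k + eps) ->
  Rbar_le (liminf u) (liminf w).
Proof.
move=> u_le_w; apply: Rbar_sup_least => _ [N ->]; fold (tail_inf u N).
case E: (tail_inf u N) => [a||] //.
  apply: Rbar_le_Fin_eps => eps /u_le_w [N' HN'].
  apply: Rbar_le_trans (tail_inf_le_liminf w (maxn N N')).
  apply: Rbar_inf_greatest => _ [k [Nk ->]] /=.
  have a_le : a <= u k by have := @tail_inf_le u N k ltac:(lia); rewrite E.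
  have := HN' k ltac:(lia); lra.
by have := @tail_inf_le u N N (leqnn N); rewrite E.
Qed.

Lemma rsum_add u m n : rsum u (m + n) = rsum u m + rsum (fun i => u (m + i)%N) n.
Proof. by elim: n => [|n IH] /=; rewrite ?addn0 ?addnS /= ?IH; ring. Qed.

Lemma rsum_ext u w n : (forall i, u i = w i) -> rsum u n = rsum w n.
Proof. by move=> uw; elim: n => [|n IH] //=; rewrite IH uw. Qed.

Lemma rsum_ge0 u n : (forall i, 0 <= u i) -> 0 <= rsum u n.
Proof. by move=> u_ge0; elim: n => [|n IH] /=; [lra|have := u_ge0 n; lra]. Qed.

Lemma rsum_abs_le u M n : (forall i, Rabs (u i) <= M) -> Rabs (rsum u n) <= INR n * M.
Proof.
move=> u_le; elim: n => [|n IH]; first by rewrite /= Rabs_R0; lra.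
rewrite S_INR /=; apply: Rle_trans (Rabs_triang _ _) _; have := u_le n; lra.
Qed.

Definition average (u : nat -> R) (n : nat) : R := / INR n * rsum u n.

Lemma average_ge0 u n : (forall i, 0 <= u i) -> 0 <= average u n.
Proof.
move=> u_ge0; case: n => [|n]; first by rewrite /average /= Rinv_0; lra.
apply: Rmult_le_pos; last exact: rsum_ge0.
by apply: Rlt_le; apply: Rinv_0_lt_compat; apply: lt_0_INR; lia.
Qed.

Lemma average_shift_le u w M n k :
  (forall i, Rabs (u i) <= M) -> (forall i, w i = u (n + i)%N) ->
  average w k <= average u k + / INR k * (2 * INR n * M).
Proof.
move=> u_le w_shift; rewrite /average -Rmult_plus_distr_l.
have inv_ge0 : 0 <= / INR k.
  case: k => [|k]; first by rewrite Rinv_0; lra.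
  by apply/Rlt_le/Rinv_0_lt_compat/lt_0_INR; lia.
apply: Rmult_le_compat_l inv_ge0 _.
have -> : rsum w k = rsum u k + rsum (fun i => u (k + i)%N) n - rsum u n.
  rewrite (rsum_ext k w_shift).
  by have := rsum_add u n k; rewrite addnC rsum_add; lra.
have := rsum_abs_le n (fun i => u_le (k + i)%N).
have := rsum_abs_le n u_le.
move: (rsum u n) (rsum (fun i => u (k + i)%N) n) => a b a_le b_le.
have := Rle_abs (- a); have := Rle_abs b; rewrite Rabs_Ropp; lra.
Qed.

Lemma inv_INR_mul_eventually_le C eps :
  0 < eps -> exists N, forall k, (N <= k)%N -> / INR k * C <= eps.
Proof.
move=> eps_pos; have C1_pos : 0 < Rabs C + 1 by have := Rabs_pos C; lra.
have [N [invN_lt /ltP N_pos]] := archimed_cor1 _ (Rdiv_lt_0_compat _ _ eps_pos C1_pos).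
exists N => k Nk.
have N_le_k : 0 < INR N <= INR k by split; [apply: lt_0_INR|apply: le_INR]; lia.
have invk_le : / INR k <= / INR N by apply: Rinv_le_contravar; lra.
have invk_pos : 0 < / INR k by apply: Rinv_0_lt_compat; lra.
have := Rle_abs C; rewrite /Rdiv in invN_lt.
have : eps * / (Rabs C + 1) * (Rabs C + 1) = eps by field; lra.
nra.
Qed.

Lemma liminf_average_shift u w M n :
  (forall i, Rabs (u i) <= M) -> (forall i, w i = u (n + i)%N) ->
  Rbar_le (liminf (average w)) (liminf (average u)).
Proof.
move=> u_le w_shift; apply: liminf_le_eventually => eps eps_pos.
have [N HN] := inv_INR_mul_eventually_le (2 * INR n * M) eps_pos.
exists N => k Nk.
by have := average_shift_le k u_le w_shift; have := HN k Nk; lra.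
Qed.

Lemma finite_abs_bounded (T : finType) (g : T -> R) : exists M, forall x, Rabs (g x) <= M.
Proof.
exists (foldr (fun x m => Rmax (Rabs (g x)) m) 0 (enum T)) => x.
have : x \in enum T by rewrite mem_enum.
elim: (enum T) => // y s IH; rewrite in_cons => /orP[/eqP <-|/IH x_le] /=.
  exact: Rmax_l.
exact: Rle_trans x_le (Rmax_r _ _).
Qed.

Lemma incentive_value_ge0 (A : arena) (gp : seq (vertex A) -> R) (sigma : profile A) :
  (forall h, 0 <= gp h) -> Rbar_le (Fin 0) (incentive_value gp sigma).
Proof. by move=> gp_ge0; apply: liminf_ge0 => n; apply: average_ge0. Qed.

Section Histories.

Variable A : arena.

Lemma hist_size (next : seq (vertex A) -> vertex A) s j : size (hist next s j) = j.+1.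
Proof. by elim: j => [|j IH] //=; rewrite size_rcons IH. Qed.

Lemma hist_behead (next : seq (vertex A) -> vertex A) s j :
  hist next s j = s :: behead (hist next s j).
Proof. by elim: j => [|j IH] //=; rewrite IH. Qed.

Lemma playv_behead (next : seq (vertex A) -> vertex A) s j :
  playv next s j = last s (behead (hist next s j)).
Proof. by rewrite /playv hist_behead. Qed.

Lemma profile_hist_path (sigma : profile A) : is_profile sigma ->
  forall i, path (edge A) (init A) (behead (hist (profile_next sigma) (init A) i)).
Proof.
move=> sigma_profile; elim=> [|i IH] //=.
rewrite hist_behead /= rcons_path IH.
exact: sigma_profile _ _ IH erefl.
Qed.

End Histories.

Section Deviation.

Variables (A : arena) (sigma : profile A).
Hypothesis sigma_profile : is_profile sigma.

Variable r0 : seq (vertex A).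
Hypothesis hist_r0 : hist (profile_next sigma) (init A) (size r0) = init A :: r0.

Local Notation v := (last (init A) r0).

Variables (p : player A) (tau : seq (vertex A) -> vertex A).

(* A history v :: rest of G_p continues the history init A :: r0 of the
   play, whose last vertex is v. *)
Definition replay (h : seq (vertex A)) : vertex A :=
  profile_next sigma (init A :: r0 ++ behead h).

Definition splice (h : seq (vertex A)) : vertex A :=
  if take (size r0).+1 h == init A :: r0 then tau (v :: drop (size r0).+1 h)
  else sigma p h.

Local Notation deviation := (deviate sigma p splice).
Local Notation game_next := (gp_next p tau replay v).

Lemma r0_path : path (edge A) (init A) r0.
Proof. by have := profile_hist_path sigma_profile (size r0); rewrite hist_r0. Qed.

Lemma replay_coalition_strategy : is_coalition_strategy_from v p replay.
Proof.
move=> rest rest_path _; rewrite /replay /profile_next /= -last_cat.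
by apply: sigma_profile; rewrite ?cat_path ?r0_path.
Qed.

Lemma splice_strategy : is_strategy_from v p tau -> is_strategy_from (init A) p splice.
Proof.
move=> tau_strategy rest rest_path rest_owner; rewrite /splice.
case: eqP => [prefix_r0|_]; last exact: sigma_profile.
set r2 := drop (size r0) rest.
have rest_eq : r0 ++ r2 = rest.
  by have := cat_take_drop (size r0).+1 (init A :: rest); rewrite prefix_r0 => -[].
rewrite -rest_eq cat_path r0_path in rest_path.
rewrite -rest_eq last_cat in rest_owner *.
by rewrite /= drop_size_cat //; apply: tau_strategy.
Qed.

Lemma deviation_next_off h :
  take (size r0).+1 h != init A :: r0 -> profile_next deviation h = profile_next sigma h.
Proof.
move=> off; rewrite /profile_next /deviate; case: eqP => [->|//].
by rewrite /splice (negbTE off).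
Qed.

Lemma deviation_next_on r2 :
  profile_next deviation (init A :: r0 ++ r2) = game_next (v :: r2).
Proof.
rewrite /profile_next /gp_next /deviate /= last_cat.
case: eqP => _; last by rewrite /replay /profile_next /= last_cat.
by rewrite /splice /= take_size_cat // drop_size_cat // eqxx.
Qed.

Lemma hist_deviation_prefix i : (i <= size r0)%N ->
  hist (profile_next deviation) (init A) i = hist (profile_next sigma) (init A) i.
Proof.
elim: i => [|i IH] i_lt //=; rewrite IH ?deviation_next_off //; last lia.
rewrite take_oversize; last by rewrite hist_size; lia.
apply/eqP => E.
by have := congr1 size E; rewrite hist_size /=; lia.
Qed.

Lemma hist_deviation j : hist (profile_next deviation) (init A) (size r0 + j) =
  init A :: r0 ++ behead (hist game_next v j).
Proof.
elim: j => [|j IH]; first by rewrite addn0 hist_deviation_prefix // hist_r0 cats0.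
rewrite addnS /= IH [hist game_next v j]hist_behead /= deviation_next_on.
by rewrite rcons_cat.
Qed.

Lemma playv_deviation j :
  playv (profile_next deviation) (init A) (size r0 + j) = playv game_next v j.
Proof. by rewrite !playv_behead hist_deviation /= last_cat. Qed.

Lemma mean_payoff_le_deviation :
  Rbar_le (mean_payoff p game_next v) (raw_payoff deviation p).
Proof.
have [M M_bound] :=
  finite_abs_bounded (fun e : vertex A * vertex A => Q2R (reward A p e.1 e.2)).
apply: (liminf_average_shift (n := size r0) (fun i => M_bound (_, _))) => i /=.
by rewrite -!playv_deviation addnS.
Qed.

End Deviation.

Theorem lemma2 (A : arena) (sigma : profile A) (gamma : incentive_profile A) :
  is_ISP sigma gamma ->
  forall p : player A, p != leader A ->
  forall v : vertex A, (exists n : nat, play sigma n = v) -> owner A v = p ->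
  Rbar_le (game_val p v)
          (Rbar_plus (incentive_value (gamma p) sigma) (raw_payoff sigma p)).
Proof.
move=> [sigma_profile [gamma_ge0 sigma_ISP]] p follower _ [n <-] _.
set r0 := behead (hist (profile_next sigma) (init A) n).
have hist_r0 : hist (profile_next sigma) (init A) (size r0) = init A :: r0.
  by rewrite size_behead hist_size -hist_behead.
rewrite /play playv_behead -/r0.
apply: Rbar_sup_least => _ [tau [tau_strategy ->]].
have splice_ok := splice_strategy sigma_profile hist_r0 tau_strategy.
apply: Rbar_le_trans (Rbar_inf_lb _) _.
  by exists (replay sigma r0); split; first exact: replay_coalition_strategy.
apply: Rbar_le_trans (mean_payoff_le_deviation hist_r0 p tau) _.
rewrite Rbar_plus_comm; apply: Rbar_le_trans (sigma_ISP p follower _ splice_ok).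
by apply/Rbar_le_addr/incentive_value_ge0 => h; apply: gamma_ge0.
Qed.
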